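(* Let $\mathcal{A}$ and $\mathcal{U}$ be Banach algebras and $\theta$ a nonzero character on $\mathcal{A}$, and regard $\mathcal{U}$ as a Banach $(\mathcal{A}\times_{\theta}\mathcal{U})$-bimodule via $(a,u)\cdot v=\theta(a)v+uv$, $v\cdot(a,u)=\theta(a)v+vu$. Then a linear map $D:\mathcal{A}\times_{\theta}\mathcal{U}\to\mathcal{U}$ is a derivation if and only if $D((a,u))=\delta_1(a)+\delta_2(u)$ where $\delta_1:\mathcal{A}\to\mathcal{U}$ and $\delta_2:\mathcal{U}\to\mathcal{U}$ are derivations satisfying \[\theta(a)\delta_2(u)=\delta_1(a)u+a\delta_2(u)=u\delta_1(a)+\delta_2(u)a\qquad(a\in\mathcal{A},u\in\mathcal{U}).\]
   Context: The Lau product $\mathcal{A}\times_{\theta}\mathcal{U}$ is $\mathcal{A}\times\mathcal{U}$ with norm $\|(a,u)\|=\|a\|+\|u\|$ and product $(a,u)(a',u')=(aa',\theta(a)u'+\theta(a')u+uu')$. The induced $\mathcal{A}$-bimodule structure on $\mathcal{U}$ is $a\cdot v=v\cdot a=\theta(a)v$ (so $a\delta_2(u)$ means $\theta(a)\delta_2(u)$), and the $\mathcal{U}$-bimodule structure is multiplication in $\mathcal{U}$. *)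

From HB Require Import structures.
From mathcomp Require Import all_boot all_order all_algebra.
From mathcomp Require Import all_classical all_reals topology normedtype.
Set Implicit Arguments. Unset Strict Implicit. Unset Printing Implicit Defensive.
Import Order.TTheory GRing.Theory Num.Theory.
Import numFieldNormedType.Exports.
Local Open Scope ring_scope.

Definition banach_algebra_mul (K : numFieldType) (X : completeNormedModType K)
    (mul : X -> X -> X) : Prop :=
  [/\ (forall (k : K) x y z, mul (k *: x + y) z = k *: mul x z + mul y z),
      (forall (k : K) x y z, mul z (k *: x + y) = k *: mul z x + mul z y),
      (forall x y z, mul x (mul y z) = mul (mul x y) z)
    & (forall x y, `|mul x y| <= `|x| * `|y|)].

Definition lin_map (K : numFieldType) (X Y : lmodType K) (f : X -> Y) : Prop :=
  forall (k : K) x y, f (k *: x + y) = k *: f x + f y.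

Definition character (K : numFieldType) (A : lmodType K) (mulA : A -> A -> A)
    (theta : A -> K) : Prop :=
  [/\ (forall (k : K) x y, theta (k *: x + y) = k * theta x + theta y),
      (forall x y, theta (mulA x y) = theta x * theta y)
    & exists x, theta x != 0].

Definition derivation (K : numFieldType) (X M : lmodType K)
    (mulX : X -> X -> X) (lact : X -> M -> M) (ract : M -> X -> M)
    (d : X -> M) : Prop :=
  lin_map d /\ forall x y, d (mulX x y) = lact x (d y) + ract (d x) y.

Definition lau_mul (K : numFieldType) (A U : lmodType K)
    (mulA : A -> A -> A) (mulU : U -> U -> U) (theta : A -> K)
    (x y : A * U) : A * U :=
  (mulA x.1 y.1, theta x.1 *: y.2 + theta y.1 *: x.2 + mulU x.2 y.2).

Definition lau_norm (K : numFieldType) (A U : normedModType K) (x : A * U) : K :=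
  `|x.1| + `|x.2|.

Definition lau_lact (K : numFieldType) (A U : lmodType K)
    (mulU : U -> U -> U) (theta : A -> K) (x : A * U) (v : U) : U :=
  theta x.1 *: v + mulU x.2 v.
Definition lau_ract (K : numFieldType) (A U : lmodType K)
    (mulU : U -> U -> U) (theta : A -> K) (v : U) (x : A * U) : U :=
  theta x.1 *: v + mulU v x.2.

(* U as an A-bimodule: a.v = v.a = theta(a) v *)
Definition theta_lact (K : numFieldType) (A U : lmodType K) (theta : A -> K)
    (a : A) (v : U) : U := theta a *: v.
Definition theta_ract (K : numFieldType) (A U : lmodType K) (theta : A -> K)
    (v : U) (a : A) : U := theta a *: v.

From HB Require Import structures.
From mathcomp Require Import all_boot all_order all_algebra.
From mathcomp Require Import all_classical all_reals topology normedtype.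
Import Order.TTheory GRing.Theory Num.Theory.
Import numFieldNormedType.Exports.
Local Open Scope ring_scope.
Set Implicit Arguments. Unset Strict Implicit.

(* A derivation D on the Lau product is the sum of its restrictions
   d1 = D(., 0) and d2 = D(0, .).  The Leibniz rule on the four kinds of
   products of elements of A x 0 and 0 x U yields the derivation rules for
   d1 and d2 and the two compatibility identities, because
   (a, 0)(0, u) = (0, u)(a, 0) = (0, theta(a) u).  Conversely, the identities
   say exactly that d1(A) annihilates U on both sides; with that, expanding
   D((a, u)(b, v)) bilinearly gives the Leibniz rule for d1 + d2. *)

Section LinMap.
Variables (K : numFieldType) (X Y : lmodType K) (f : X -> Y).
Hypothesis f_lin : lin_map f.

Lemma lin_map0 : f 0 = 0.
Proof. by have := f_lin (-1) 0 0; rewrite scaler0 addr0 scaleN1r addNr. Qed.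

Lemma lin_mapD x y : f (x + y) = f x + f y.
Proof. by have := f_lin 1 x y; rewrite !scale1r. Qed.

Lemma lin_mapZ k x : f (k *: x) = k *: f x.
Proof. by have := f_lin k x 0; rewrite !addr0 lin_map0 addr0. Qed.

End LinMap.

Section LinMapPair.
Variables (K : numFieldType) (A U Y : lmodType K) (f : A * U -> Y).
Hypothesis f_lin : lin_map f.

Lemma pair_scale_add k a b u v :
  k *: (a, u) + (b, v) = (k *: a + b, k *: u + v) :> A * U.
Proof. by []. Qed.

Lemma lin_map_inl : lin_map (fun a => f (a, 0)).
Proof. by move=> k a b; rewrite -f_lin pair_scale_add scaler0 addr0. Qed.

Lemma lin_map_inr : lin_map (fun u => f (0, u)).
Proof. by move=> k u v; rewrite -f_lin pair_scale_add scaler0 addr0. Qed.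

Lemma lin_map_pair a u : f (a, u) = f (a, 0) + f (0, u).
Proof.
by rewrite -[f (a, 0)]scale1r -f_lin pair_scale_add !scale1r addr0 add0r.
Qed.

End LinMapPair.

Lemma lin_map_sum (K : numFieldType) (A U Y : lmodType K)
    (f : A -> Y) (g : U -> Y) :
  lin_map f -> lin_map g -> lin_map (fun x : A * U => f x.1 + g x.2).
Proof. by move=> f_lin g_lin k x y /=; rewrite f_lin g_lin scalerDr addrACA. Qed.

Section BanachAlgebra.
Variables (K : numFieldType) (X : completeNormedModType K) (mul : X -> X -> X).
Hypothesis mulX : banach_algebra_mul mul.

Lemma banach_mul_linl z : lin_map (mul ^~ z).
Proof. by case: mulX => mulDl _ _ _ k x y; apply: mulDl. Qed.

Lemma banach_mul_linr z : lin_map (mul z).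
Proof. by case: mulX => _ mulDr _ _ k x y; apply: mulDr. Qed.

End BanachAlgebra.

Lemma character0 (K : numFieldType) (A : lmodType K) (mulA : A -> A -> A)
    (theta : A -> K) :
  character mulA theta -> theta 0 = 0.
Proof.
by case=> theta_lin _ _; have := theta_lin (-1) 0 0; rewrite scaler0 addr0 mulN1r addNr.
Qed.

Section LauDerivation.
Variables (K : numFieldType) (A U : lmodType K).
Variables (mulA : A -> A -> A) (mulU : U -> U -> U) (theta : A -> K).
Hypotheses (mulA_linl : forall b, lin_map (mulA ^~ b))
           (mulA_linr : forall a, lin_map (mulA a)).
Hypotheses (mulU_linl : forall v, lin_map (mulU ^~ v))
           (mulU_linr : forall u, lin_map (mulU u)).
Hypothesis theta0 : theta 0 = 0.

Local Notation lau_mul := (lau_mul mulA mulU theta).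
Local Notation lact := (lau_lact mulU theta).
Local Notation ract := (lau_ract mulU theta).

Lemma mulA0l b : mulA 0 b = 0. Proof. exact: (lin_map0 (mulA_linl b)). Qed.
Lemma mulA0r a : mulA a 0 = 0. Proof. exact: (lin_map0 (mulA_linr a)). Qed.
Lemma mulU0l v : mulU 0 v = 0. Proof. exact: (lin_map0 (mulU_linl v)). Qed.
Lemma mulU0r u : mulU u 0 = 0. Proof. exact: (lin_map0 (mulU_linr u)). Qed.

Lemma lau_mul_inl a b : lau_mul (a, 0) (b, 0) = (mulA a b, 0).
Proof. by rewrite /lau_mul /= mulU0l !scaler0 !addr0. Qed.

Lemma lau_mul_inr u v : lau_mul (0, u) (0, v) = (0, mulU u v).
Proof. by rewrite /lau_mul /= mulA0l theta0 !scale0r !add0r. Qed.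

Lemma lau_mul_inl_inr a u : lau_mul (a, 0) (0, u) = (0, theta a *: u).
Proof. by rewrite /lau_mul /= mulA0r mulU0l scaler0 !addr0. Qed.

Lemma lau_mul_inr_inl a u : lau_mul (0, u) (a, 0) = (0, theta a *: u).
Proof. by rewrite /lau_mul /= mulA0l mulU0r scaler0 add0r addr0. Qed.

Lemma lau_lact_inl a v : lact (a, 0) v = theta a *: v.
Proof. by rewrite /lau_lact mulU0l addr0. Qed.

Lemma lau_lact_inr u v : lact (0, u) v = mulU u v.
Proof. by rewrite /lau_lact theta0 scale0r add0r. Qed.

Lemma lau_ract_inl a v : ract v (a, 0) = theta a *: v.
Proof. by rewrite /lau_ract mulU0r addr0. Qed.

Lemma lau_ract_inr u v : ract v (0, u) = mulU v u.
Proof. by rewrite /lau_ract theta0 scale0r add0r. Qed.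

Section Restriction.
Variable D : A * U -> U.
Hypothesis D_der : derivation lau_mul lact ract D.

Let D_lin : lin_map D := D_der.1.
Let D_leibniz := D_der.2.

Lemma lau_derivation_inl :
  derivation mulA (theta_lact theta) (theta_ract theta) (fun a => D (a, 0)).
Proof.
split; first exact: lin_map_inl.
by move=> a b; rewrite -lau_mul_inl D_leibniz lau_lact_inl lau_ract_inl.
Qed.

Lemma lau_derivation_inr : derivation mulU mulU mulU (fun u => D (0, u)).
Proof.
split; first exact: lin_map_inr.
by move=> u v; rewrite -lau_mul_inr D_leibniz lau_lact_inr lau_ract_inr.
Qed.

Lemma lau_derivation_compatl a u :
  theta a *: D (0, u) = mulU (D (a, 0)) u + theta_lact theta a (D (0, u)).
Proof.
rewrite -(lin_mapZ (lin_map_inr D_lin)) -lau_mul_inl_inr D_leibniz.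
by rewrite lau_lact_inl lau_ract_inr addrC.
Qed.

Lemma lau_derivation_compatr a u :
  theta a *: D (0, u) = mulU u (D (a, 0)) + theta_ract theta (D (0, u)) a.
Proof.
rewrite -(lin_mapZ (lin_map_inr D_lin)) -lau_mul_inr_inl D_leibniz.
by rewrite lau_lact_inr lau_ract_inl.
Qed.

End Restriction.

Section Extension.
Variables (d1 : A -> U) (d2 : U -> U).
Hypotheses (d1_der : derivation mulA (theta_lact theta) (theta_ract theta) d1)
           (d2_der : derivation mulU mulU mulU d2).
Hypotheses (d1_annihl : forall a u, mulU (d1 a) u = 0)
           (d1_annihr : forall a u, mulU u (d1 a) = 0).

Lemma lau_derivation_sum :
  derivation lau_mul lact ract (fun x => d1 x.1 + d2 x.2).
Proof.
case: d1_der d2_der => d1_lin d1_leibniz [d2_lin d2_leibniz].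
split; first exact: lin_map_sum.
move=> [a u] [b v]; rewrite /lau_mul /lau_lact /lau_ract /=.
rewrite d1_leibniz !(lin_mapD d2_lin) !(lin_mapZ d2_lin) d2_leibniz.
rewrite !(lin_mapD (mulU_linr _)) !(lin_mapD (mulU_linl _)) d1_annihl d1_annihr.
rewrite !add0r !scalerDr /theta_lact /theta_ract.
by rewrite (AC (2*(2*2)) ((1*3*5)*(2*4*6))).
Qed.

End Extension.

End LauDerivation.

Theorem proposition2p19 (K : numFieldType)
  (A U : completeNormedModType K) (mulA : A -> A -> A) (mulU : U -> U -> U)
  (theta : A -> K)
  (hA : banach_algebra_mul mulA) (hU : banach_algebra_mul mulU)
  (htheta : character mulA theta)
  (D : A * U -> U) (hD : lin_map D) :
  derivation (lau_mul mulA mulU theta) (lau_lact mulU theta)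
    (lau_ract mulU theta) D
  <->
  exists (d1 : A -> U) (d2 : U -> U),
    [/\ derivation mulA (theta_lact theta) (theta_ract theta) d1,
        derivation mulU mulU mulU d2,
        (forall a u, D (a, u) = d1 a + d2 u),
        (forall a u, theta a *: d2 u = mulU (d1 a) u + theta_lact theta a (d2 u))
      & (forall a u, theta a *: d2 u = mulU u (d1 a) + theta_ract theta (d2 u) a)].
Proof.
have [mulA_linl mulA_linr] := (banach_mul_linl hA, banach_mul_linr hA).
have [mulU_linl mulU_linr] := (banach_mul_linl hU, banach_mul_linr hU).
have theta0 := character0 htheta.
split=> [D_der | [d1 [d2 [d1_der d2_der D_sum compatl compatr]]]].
  exists (fun a => D (a, 0)), (fun u => D (0, u)); split.
  (* The zeros of A and U reach the goal through the complete normed module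
     instances, so these lemmas match only up to conversion, not for [exact:]. *)
  - exact (lau_derivation_inl mulU_linl mulU_linr D_der).
  - exact (lau_derivation_inr mulA_linl theta0 D_der).
  - exact: lin_map_pair.
  - exact (lau_derivation_compatl mulA_linr mulU_linl theta0 D_der).
  - exact (lau_derivation_compatr mulA_linl mulU_linr theta0 D_der).
have d1_annihl a u : mulU (d1 a) u = 0.
  by apply: (addIr (theta a *: d2 u)); rewrite add0r [RHS]compatl.
have d1_annihr a u : mulU u (d1 a) = 0.
  by apply: (addIr (theta a *: d2 u)); rewrite add0r [RHS]compatr.
have -> : D = fun x => d1 x.1 + d2 x.2 by apply/funext => -[a u]; exact: D_sum.
exact: (lau_derivation_sum mulU_linl mulU_linr d1_der d2_der d1_annihl d1_annihr).
Qed.
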